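(* The pair $(\ell_2^2, C[0,1])$ fails the uniform sBPBp.
   Context: Scalars $\mathbb{K}=\mathbb{R}$ or $\mathbb{C}$; $\ell_2^2$ is $\mathbb{K}^2$ with the Euclidean norm; $C[0,1]$ is the space of continuous $\mathbb{K}$-valued functions on $[0,1]$ with the sup norm; $S_X$ is the unit sphere of $X$ and $\mathcal{L}(X,Y)$ the bounded linear operators. A pair of Banach spaces $(X,Y)$ has the uniform strong Bishop–Phelps–Bollobás property (uniform sBPBp) if for every $\varepsilon>0$ there exists $\eta(\varepsilon)>0$ such that whenever $T\in\mathcal{L}(X,Y)$ with $\|T\|=1$ and $x_0\in S_X$ satisfy $\|T(x_0)\|>1-\eta(\varepsilon)$, there exists $x_1\in S_X$ with $\|T(x_1)\|=1$ and $\|x_1-x_0\|<\varepsilon$. *)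

From Stdlib Require Import Reals Lra ClassicalEpsilon.
Open Scope R_scope.

(* Supremum of a set of reals (meaningful when the lub exists; otherwise an
   unspecified real). *)
Definition Rsup (A : R -> Prop) : R :=
  epsilon (inhabits 0) (fun s => is_lub A s).

Record Cplx : Type := mkC { Re : R; Im : R }.
Definition Cabs (z : Cplx) : R := sqrt (Re z ^ 2 + Im z ^ 2).
Definition Cadd (z w : Cplx) : Cplx := mkC (Re z + Re w) (Im z + Im w).
Definition Cmul (z w : Cplx) : Cplx :=
  mkC (Re z * Re w - Im z * Im w) (Re z * Im w + Im z * Re w).
Definition Copp (z : Cplx) : Cplx := mkC (- Re z) (- Im z).

Section Generic.
Variables (K : Type) (kabs : K -> R) (kadd kmul : K -> K -> K) (kopp : K -> K).

Definition vec : Type := (K * K)%type.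
Definition l2norm (x : vec) : R := sqrt (kabs (fst x) ^ 2 + kabs (snd x) ^ 2).
Definition vadd (x y : vec) : vec := (kadd (fst x) (fst y), kadd (snd x) (snd y)).
Definition vscal (a : K) (x : vec) : vec := (kmul a (fst x), kmul a (snd x)).
Definition vsub (x y : vec) : vec := vadd x (kopp (fst y), kopp (snd y)).

(* C[0,1]: K-valued functions continuous on [0,1] (values off [0,1] are
   irrelevant to the norm), with the sup norm over [0,1]. *)
Definition cont_on01 (f : R -> K) : Prop :=
  forall t, 0 <= t <= 1 -> forall e, 0 < e -> exists d, 0 < d /\
    forall s, 0 <= s <= 1 -> Rabs (s - t) < d -> kabs (kadd (f s) (kopp (f t))) < e.
Definition supnorm (f : R -> K) : R :=
  Rsup (fun y => exists t, 0 <= t <= 1 /\ y = kabs (f t)).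

Definition is_bdd_op (T : vec -> R -> K) : Prop :=
  (forall x, cont_on01 (T x)) /\
  (forall (a : K) (x y : vec),
      T (vadd (vscal a x) y) = (fun t => kadd (kmul a (T x t)) (T y t))) /\
  (exists M, forall x, supnorm (T x) <= M * l2norm x).

Definition opnorm (T : vec -> R -> K) : R :=
  Rsup (fun y => exists x, l2norm x <= 1 /\ y = supnorm (T x)).

Definition uniform_sBPBp : Prop :=
  forall eps, 0 < eps -> exists eta, 0 < eta /\
    forall (T : vec -> R -> K) (x0 : vec),
      is_bdd_op T -> opnorm T = 1 -> l2norm x0 = 1 ->
      supnorm (T x0) > 1 - eta ->
      exists x1, l2norm x1 = 1 /\ supnorm (T x1) = 1 /\
                 l2norm (vsub x1 x0) < eps.
End Generic.

Definition uniform_sBPBp_real : Prop := uniform_sBPBp R Rabs Rplus Rmult Ropp.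
Definition uniform_sBPBp_complex : Prop := uniform_sBPBp Cplx Cabs Cadd Cmul Copp.

(* For 0 <= c < 1 let T_c x be the affine function on [0,1] running from c x2 at 0 to x1 at 1.
   Its sup norm is max (|x1|, c |x2|), so ||T_c|| = 1 and T_c attains its norm only at vectors
   with |x1| = 1, hence x2 = 0; these all lie at distance at least 1 from x0 = (0, 1).  But
   ||T_c x0|| = c, which is as close to 1 as we like. *)
From Stdlib Require Import Reals Lra ClassicalEpsilon FunctionalExtensionality.
Open Scope R_scope.

Lemma Rsup_lub (A : R -> Prop) (s : R) : is_lub A s -> Rsup A = s.
Proof.
  intros [ubs lubs]. unfold Rsup.
  destruct (epsilon_spec (inhabits 0) (fun s => is_lub A s) (ex_intro _ s (conj ubs lubs)))
    as [ubm lubm].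
  apply Rle_antisym; auto.
Qed.

Lemma le_sqrt_sum_sq (a b : R) : 0 <= a -> a <= sqrt (a ^ 2 + b ^ 2).
Proof.
  intros a_ge0. rewrite <- (sqrt_pow2 a a_ge0) at 1.
  apply sqrt_le_1_alt. pose proof (pow2_ge_0 b). lra.
Qed.

Lemma sqrt_sum_sq_le (a b : R) : sqrt (a ^ 2 + b ^ 2) <= Rabs a + Rabs b.
Proof.
  pose proof (Rabs_pos a); pose proof (Rabs_pos b).
  rewrite <- (sqrt_pow2 (Rabs a + Rabs b)) by lra.
  apply sqrt_le_1_alt. rewrite <- (pow2_abs a), <- (pow2_abs b). nra.
Qed.

Lemma sqr_convex_comb (a b t : R) :
  0 <= t <= 1 -> ((1 - t) * a + t * b) ^ 2 <= (1 - t) * a ^ 2 + t * b ^ 2.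
Proof.
  intros t01.
  assert (0 <= t * (1 - t) * (a - b) ^ 2) by (apply Rmult_le_pos; [nra | apply pow2_ge_0]).
  nra.
Qed.

Section Scalars.
Variables (K : Type) (kabs : K -> R) (kadd kmul : K -> K -> K) (kopp : K -> K).
Hypothesis kabs_ge0 : forall a, 0 <= kabs a.

Lemma supnorm_endpoints (h : R -> K) :
  (forall t, 0 <= t <= 1 -> kabs (h t) <= Rmax (kabs (h 0)) (kabs (h 1))) ->
  supnorm K kabs h = Rmax (kabs (h 0)) (kabs (h 1)).
Proof.
  intros h_le. apply Rsup_lub. split.
  - intros y [t [t01 ->]]. auto.
  - intros b b_ub. apply Rmax_lub; apply b_ub; [exists 0 | exists 1]; split; auto; lra.
Qed.

Lemma cont_on01_lipschitz (f : R -> K) (L : R) :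
  0 <= L -> (forall s t, kabs (kadd (f s) (kopp (f t))) <= L * Rabs (s - t)) ->
  cont_on01 K kabs kadd kopp f.
Proof.
  intros L_ge0 f_lip t _ e e_gt0. exists (e / (L + 1)). split.
  - apply Rdiv_lt_0_compat; lra.
  - intros s _ st_lt. apply (Rle_lt_trans _ _ _ (f_lip s t)).
    apply (Rmult_lt_compat_r (L + 1)) in st_lt; [|lra].
    unfold Rdiv in st_lt. rewrite Rmult_assoc, Rinv_l in st_lt by lra.
    pose proof (Rabs_pos (s - t)). nra.
Qed.

Lemma weighted_max_le_l2norm (c : R) (x : vec K) :
  0 <= c <= 1 -> Rmax (kabs (fst x)) (c * kabs (snd x)) <= l2norm K kabs x.
Proof.
  intros c01. destruct x as [a b]. unfold l2norm; cbn [fst snd].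
  pose proof (le_sqrt_sum_sq (kabs a) (kabs b) (kabs_ge0 a)) as a_le.
  pose proof (le_sqrt_sum_sq (kabs b) (kabs a) (kabs_ge0 b)) as b_le.
  rewrite Rplus_comm in b_le. pose proof (kabs_ge0 b).
  apply Rmax_lub; nra.
Qed.

Definition weighted_supnorm (c : R) (T : vec K -> R -> K) : Prop :=
  forall x, supnorm K kabs (T x) = Rmax (kabs (fst x)) (c * kabs (snd x)).

Lemma is_bdd_op_weighted (c : R) (T : vec K -> R -> K) :
  0 <= c <= 1 -> (forall x, cont_on01 K kabs kadd kopp (T x)) ->
  (forall a x y,
      T (vadd K kadd (vscal K kmul a x) y) = (fun t => kadd (kmul a (T x t)) (T y t))) ->
  weighted_supnorm c T -> is_bdd_op K kabs kadd kmul kopp T.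
Proof.
  intros c01 T_cont T_lin T_sup. split; [exact T_cont | split; [exact T_lin |]].
  exists 1. intros x. rewrite T_sup, Rmult_1_l. exact (weighted_max_le_l2norm c x c01).
Qed.

Variables (zero one : K).
Hypotheses (kabs_zero : kabs zero = 0) (kabs_one : kabs one = 1)
  (sub_zero : forall a, kabs (kadd a (kopp zero)) = kabs a).

Lemma l2norm_axis1 : l2norm K kabs (one, zero) = 1.
Proof.
  unfold l2norm; cbn [fst snd]. rewrite kabs_one, kabs_zero.
  replace (_ + _) with 1 by ring. exact sqrt_1.
Qed.

Lemma l2norm_axis2 : l2norm K kabs (zero, one) = 1.
Proof.
  unfold l2norm; cbn [fst snd]. rewrite kabs_one, kabs_zero.
  replace (_ + _) with 1 by ring. exact sqrt_1.
Qed.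

Lemma opnorm_weighted (c : R) (T : vec K -> R -> K) :
  0 <= c <= 1 -> weighted_supnorm c T -> opnorm K kabs T = 1.
Proof.
  intros c01 T_sup. apply Rsup_lub. split.
  - intros y [x [x_le1 ->]]. rewrite T_sup.
    exact (Rle_trans _ _ _ (weighted_max_le_l2norm c x c01) x_le1).
  - intros b b_ub. apply b_ub. exists (one, zero). split.
    + rewrite l2norm_axis1. lra.
    + rewrite T_sup; cbn [fst snd]. rewrite kabs_one, kabs_zero, Rmax_left; lra.
Qed.

Lemma weighted_max_attained (c : R) (x : vec K) :
  0 <= c < 1 -> l2norm K kabs x = 1 -> Rmax (kabs (fst x)) (c * kabs (snd x)) = 1 ->
  kabs (fst x) = 1.
Proof.
  intros c01 x_norm x_max. destruct x as [a b]. unfold l2norm in x_norm; cbn [fst snd] in *.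
  pose proof (le_sqrt_sum_sq (kabs b) (kabs a) (kabs_ge0 b)) as b_le1.
  rewrite Rplus_comm, x_norm in b_le1. pose proof (kabs_ge0 b).
  revert x_max. unfold Rmax. destruct (Rle_dec (kabs a) (c * kabs b)); nra.
Qed.

Lemma dist_axis2_ge1 (x : vec K) :
  kabs (fst x) = 1 -> 1 <= l2norm K kabs (vsub K kadd kopp x (zero, one)).
Proof.
  intros x1. unfold vsub, vadd, l2norm; cbn [fst snd]. rewrite sub_zero, x1.
  apply le_sqrt_sum_sq. lra.
Qed.

Lemma not_uniform_sBPBp_weighted (T : R -> vec K -> R -> K) :
  (forall c, 0 <= c < 1 -> is_bdd_op K kabs kadd kmul kopp (T c)) ->
  (forall c, 0 <= c < 1 -> weighted_supnorm c (T c)) ->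
  ~ uniform_sBPBp K kabs kadd kmul kopp.
Proof.
  intros T_bdd T_sup usbpbp.
  destruct (usbpbp 1 Rlt_0_1) as [eta [eta_gt0 sbpb]].
  set (c := 1 - Rmin eta 1 / 2).
  assert (c01 : 0 <= c < 1 /\ c > 1 - eta).
  { pose proof (Rmin_l eta 1); pose proof (Rmin_r eta 1).
    pose proof (Rmin_glb_lt eta 1 0 eta_gt0 Rlt_0_1). unfold c. lra. }
  destruct c01 as [c01 c_close].
  destruct (sbpb (T c) (zero, one)) as [x1 [x1_norm [x1_attains x1_close]]].
  - exact (T_bdd c c01).
  - apply (opnorm_weighted c); [lra | exact (T_sup c c01)].
  - exact l2norm_axis2.
  - rewrite T_sup by exact c01; cbn [fst snd].
    rewrite kabs_one, kabs_zero, Rmax_right; lra.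
  - rewrite T_sup in x1_attains by exact c01.
    pose proof (dist_axis2_ge1 x1 (weighted_max_attained c x1 c01 x1_norm x1_attains)).
    lra.
Qed.

End Scalars.

Definition interp (c : R) (x : vec R) (t : R) : R := (1 - t) * (c * snd x) + t * fst x.

Lemma Rabs_convex_comb (a b t : R) :
  0 <= t <= 1 -> Rabs ((1 - t) * a + t * b) <= Rmax (Rabs a) (Rabs b).
Proof.
  intros t01. eapply Rle_trans; [apply Rabs_triang |].
  rewrite !Rabs_mult, (Rabs_pos_eq (1 - t)), (Rabs_pos_eq t) by lra.
  set (m := Rmax (Rabs a) (Rabs b)).
  assert ((1 - t) * Rabs a <= (1 - t) * m) by (apply Rmult_le_compat_l; [lra | apply Rmax_l]).
  assert (t * Rabs b <= t * m) by (apply Rmult_le_compat_l; [lra | apply Rmax_r]).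
  lra.
Qed.

Lemma interp_sub (c : R) (x : vec R) (s t : R) :
  interp c x s - interp c x t = (fst x - c * snd x) * (s - t).
Proof. unfold interp. ring. Qed.

Lemma interp_weighted_supnorm (c : R) :
  0 <= c -> weighted_supnorm R Rabs c (interp c).
Proof.
  intros c_ge0 x. rewrite supnorm_endpoints.
  - unfold interp. rewrite Rmax_comm. f_equal.
    + f_equal. ring.
    + rewrite <- (Rabs_pos_eq c c_ge0) at 2. rewrite <- Rabs_mult. f_equal. ring.
  - intros t t01. unfold interp.
    replace ((1 - 0) * (c * snd x) + 0 * fst x) with (c * snd x) by ring.
    replace ((1 - 1) * (c * snd x) + 1 * fst x) with (fst x) by ring.
    exact (Rabs_convex_comb _ _ t t01).
Qed.

Lemma interp_is_bdd_op (c : R) :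
  0 <= c <= 1 -> is_bdd_op R Rabs Rplus Rmult Ropp (interp c).
Proof.
  intros c01. apply (is_bdd_op_weighted _ _ _ _ _ Rabs_pos c); auto.
  - intros x.
    apply (cont_on01_lipschitz R Rabs Rplus Ropp _ (Rabs (fst x - c * snd x)) (Rabs_pos _)).
    intros s t. rewrite <- Rabs_mult, <- interp_sub. apply Rle_refl.
  - intros a x y. apply functional_extensionality. intros t. unfold interp; cbn. ring.
  - apply interp_weighted_supnorm. lra.
Qed.

Lemma not_uniform_sBPBp_real : ~ uniform_sBPBp_real.
Proof.
  apply (not_uniform_sBPBp_weighted R Rabs Rplus Rmult Ropp Rabs_pos 0 1 Rabs_R0 Rabs_R1
           ltac:(intros a; f_equal; ring) interp).
  - intros c c01. apply interp_is_bdd_op. lra.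
  - intros c c01. apply interp_weighted_supnorm. lra.
Qed.

Definition interpC (c : R) (x : vec Cplx) (t : R) : Cplx :=
  mkC (interp c (Re (fst x), Re (snd x)) t) (interp c (Im (fst x), Im (snd x)) t).

Lemma Cabs_ge0 (z : Cplx) : 0 <= Cabs z.
Proof. apply sqrt_pos. Qed.

Lemma Cabs_scale (c a b : R) : 0 <= c -> Cabs (mkC (c * a) (c * b)) = c * Cabs (mkC a b).
Proof.
  intros c_ge0. unfold Cabs; cbn [Re Im].
  replace ((c * a) ^ 2 + (c * b) ^ 2) with (c ^ 2 * (a ^ 2 + b ^ 2)) by ring.
  rewrite sqrt_mult_alt, sqrt_pow2 by (lra || apply pow2_ge_0). reflexivity.
Qed.

Lemma Cabs_convex_comb (a1 a2 b1 b2 t : R) : 0 <= t <= 1 ->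
  Cabs (mkC ((1 - t) * a1 + t * b1) ((1 - t) * a2 + t * b2))
  <= Rmax (Cabs (mkC a1 a2)) (Cabs (mkC b1 b2)).
Proof.
  intros t01. unfold Cabs; cbn [Re Im].
  set (na := a1 ^ 2 + a2 ^ 2); set (nb := b1 ^ 2 + b2 ^ 2).
  apply Rle_trans with (sqrt (Rmax na nb)).
  - apply sqrt_le_1_alt.
    pose proof (sqr_convex_comb a1 b1 t t01); pose proof (sqr_convex_comb a2 b2 t t01).
    pose proof (Rmax_l na nb); pose proof (Rmax_r na nb). unfold na, nb in *. nra.
  - apply (Rmax_case na nb (fun m => sqrt m <= Rmax (sqrt na) (sqrt nb)));
      [apply Rmax_l | apply Rmax_r].
Qed.

Lemma interpC_weighted_supnorm (c : R) :
  0 <= c -> weighted_supnorm Cplx Cabs c (interpC c).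
Proof.
  intros c_ge0 [[p1 q1] [p2 q2]]; cbn [fst snd].
  assert (at0 : interpC c (mkC p1 q1, mkC p2 q2) 0 = mkC (c * p2) (c * q2))
    by (unfold interpC, interp; cbn; f_equal; ring).
  assert (at1 : interpC c (mkC p1 q1, mkC p2 q2) 1 = mkC p1 q1)
    by (unfold interpC, interp; cbn; f_equal; ring).
  rewrite supnorm_endpoints.
  - rewrite at0, at1, Cabs_scale by exact c_ge0. apply Rmax_comm.
  - intros t t01. rewrite at0, at1. exact (Cabs_convex_comb _ _ _ _ t t01).
Qed.

Lemma interpC_is_bdd_op (c : R) :
  0 <= c <= 1 -> is_bdd_op Cplx Cabs Cadd Cmul Copp (interpC c).
Proof.
  intros c01. apply (is_bdd_op_weighted _ _ _ _ _ Cabs_ge0 c); auto.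
  - intros [[p1 q1] [p2 q2]].
    set (L := Rabs (p1 - c * p2) + Rabs (q1 - c * q2)).
    apply (cont_on01_lipschitz Cplx Cabs Cadd Copp _ L).
    + unfold L. pose proof (Rabs_pos (p1 - c * p2)); pose proof (Rabs_pos (q1 - c * q2)). lra.
    + intros s t. unfold interpC, Cadd, Copp; cbn [fst snd Re Im].
      rewrite <- !Rminus_def, !interp_sub; cbn [fst snd].
      eapply Rle_trans; [apply sqrt_sum_sq_le |].
      cbn [Re Im]. rewrite !Rabs_mult. unfold L. lra.
  - intros [a1 a2] [[x1 x2] [x3 x4]] [[y1 y2] [y3 y4]].
    apply functional_extensionality. intros t.
    unfold interpC, interp, vadd, vscal, Cadd, Cmul; cbn. f_equal; ring.
  - apply interpC_weighted_supnorm. lra.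
Qed.

Lemma not_uniform_sBPBp_complex : ~ uniform_sBPBp_complex.
Proof.
  assert (Cabs0 : Cabs (mkC 0 0) = 0)
    by (unfold Cabs; cbn [Re Im]; replace (0 ^ 2 + 0 ^ 2) with 0 by ring; exact sqrt_0).
  assert (Cabs1 : Cabs (mkC 1 0) = 1)
    by (unfold Cabs; cbn [Re Im]; replace (1 ^ 2 + 0 ^ 2) with 1 by ring; exact sqrt_1).
  assert (sub0 : forall z, Cabs (Cadd z (Copp (mkC 0 0))) = Cabs z)
    by (intros [a b]; unfold Cabs, Cadd, Copp; cbn [Re Im]; f_equal; ring).
  apply (not_uniform_sBPBp_weighted Cplx Cabs Cadd Cmul Copp Cabs_ge0 _ _ Cabs0 Cabs1 sub0
           interpC).
  - intros c c01. apply interpC_is_bdd_op. lra.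
  - intros c c01. apply interpC_weighted_supnorm. lra.
Qed.

Theorem mainTheorem13 : ~ uniform_sBPBp_real /\ ~ uniform_sBPBp_complex.
Proof. exact (conj not_uniform_sBPBp_real not_uniform_sBPBp_complex). Qed.
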